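(* There is no $3$-dimensional Hopf superalgebra $A=A_0\oplus A_1$ over $\mathbb{K}$ with $A_1\neq 0$.
   Context: $\mathbb{K}$ is an algebraically closed field of characteristic $0$. A superalgebra is an associative unital $\mathbb{K}$-algebra $A=A_0\oplus A_1$ with a $\mathbb{Z}/2\mathbb{Z}$-grading such that $A_iA_j\subseteq A_{i+j}$ and $1\in A_0$; $|a|$ denotes the degree. $A\otimes A$ has product $(a\otimes b)(c\otimes d)=(-1)^{|b||c|}ac\otimes bd$. A superbialgebra is a superalgebra with even linear maps $\Delta:A\to A\otimes A$, $\varepsilon:A\to\mathbb{K}$ ($\mathbb{K}$ in degree $0$) which are coassociative and counital and are unital algebra homomorphisms. A Hopf superalgebra is a superbialgebra with an even linear map $S:A\to A$ satisfying $\mu\circ(S\otimes\mathrm{id})\circ\Delta=\mu\circ(\mathrm{id}\otimes S)\circ\Delta=\eta\circ\varepsilon$, where $\mu$ is the product and $\eta(\lambda)=\lambda1$. *)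

From HB Require Import structures.
From mathcomp Require Import all_boot all_order all_algebra.
Set Implicit Arguments. Unset Strict Implicit. Unset Printing Implicit Defensive.
Import Order.TTheory GRing.Theory Num.Theory.
Local Open Scope ring_scope.

(* A finite-dimensional superalgebra A = A_0 (+) A_1 over K is described in a
   homogeneous basis e_0, ..., e_(n-1) of A (every Z/2-graded space has one:
   a basis of A_0 together with a basis of A_1).
   - d i : bool is the degree of e_i (false = even, true = odd);
   - e_i e_j = \sum_k m i j k e_k                    (product)
   - 1 = \sum_k u k e_k                              (unit)
   - Delta(e_k) = \sum_(i,j) c k i j e_i (x) e_j     (coproduct; e_i(x)e_j
                                                      is a basis of A (x) A)
   - eps(e_k) = ep k                                 (counit)
   - S(e_i) = \sum_j s i j e_j                       (antipode)
   All maps are linear by construction; every axiom below is the literal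
   coordinate expression of the corresponding axiom on basis elements. *)

Definition kron {K : nzRingType} n (i j : 'I_n) : K := (i == j)%:R.

Definition ssign {K : nzRingType} (a b : bool) : K := if a && b then -1 else 1.

Definition is_hopf_superalgebra (K : fieldType) (n : nat) (d : 'I_n -> bool)
  (m : 'I_n -> 'I_n -> 'I_n -> K) (u : 'I_n -> K)
  (c : 'I_n -> 'I_n -> 'I_n -> K) (ep : 'I_n -> K)
  (s : 'I_n -> 'I_n -> K) : Prop :=
  (forall i j k, m i j k != 0 -> d k = d i (+) d j) /\
      (forall k, u k != 0 -> d k = false) /\
  (* Delta, eps, S are even (K in degree 0; e_i(x)e_j has degree d i + d j) *)
      (forall k i j, c k i j != 0 -> d k = d i (+) d j) /\
      (forall k, ep k != 0 -> d k = false) /\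
      (forall i j, s i j != 0 -> d j = d i) /\
      (forall i j l k, \sum_p m i j p * m p l k = \sum_p m j l p * m i p k) /\
      (forall j k, \sum_p u p * m p j k = kron j k) /\
      (forall j k, \sum_p u p * m j p k = kron j k) /\
      (forall k i j l, \sum_p c k p l * c p i j = \sum_p c k i p * c p j l) /\
      (forall k j, \sum_i ep i * c k i j = kron k j) /\
      (forall k i, \sum_j ep j * c k i j = kron k i) /\
  (* Delta is an algebra map A -> A (x) A (super tensor product) *)
      (forall a b i j, \sum_p m a b p * c p i j =
         \sum_i1 \sum_j1 \sum_i2 \sum_j2
           c a i1 j1 * c b i2 j2 * ssign (d j1) (d i2)
             * m i1 i2 i * m j1 j2 j) /\
      (forall i j, \sum_p u p * c p i j = u i * u j) /\
      (forall a b, \sum_p m a b p * ep p = ep a * ep b) /\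
      (\sum_p u p * ep p = 1) /\
      (forall k q, \sum_i \sum_j \sum_p c k i j * s i p * m p j q = ep k * u q) /\
      (forall k q, \sum_i \sum_j \sum_p c k i j * s j p * m i p q = ep k * u q).

(* The unit 1 is even and ε(1) = 1, so once some basis vector e_o is odd there is
   a homogeneous basis 1, x, e_o with ε(x) = ε(e_o) = 0, and the structure
   constants in this basis satisfy the same axioms.  If x is odd, then A_0 = K1 and
   Δ y = y⊗1 + 1⊗y for odd y, so the coefficient of x⊗e_o in Δ(x e_o) = Δ(x) Δ(e_o)
   is 1, although x e_o lies in K1.  If x is even, a handful of (co)associativity,
   multiplicativity and antipode equations are incompatible.  If every basis
   vector is odd, then 1 = 0. *)

From HB Require Import structures.
From mathcomp Require Import all_boot all_order all_algebra.
From mathcomp Require Import ring.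
From Stdlib Require Import FunctionalExtensionality.
Set Implicit Arguments. Unset Strict Implicit. Unset Printing Implicit Defensive.
Import GRing.Theory.
Local Open Scope ring_scope.

Section HopfAxioms.
Variables (K : fieldType) (n : nat) (d : 'I_n -> bool).
Variables (m : 'I_n -> 'I_n -> 'I_n -> K) (u : 'I_n -> K).
Variables (c : 'I_n -> 'I_n -> 'I_n -> K) (ep : 'I_n -> K) (s : 'I_n -> 'I_n -> K).
Hypothesis hopf : is_hopf_superalgebra d m u c ep s.

Lemma hopf_mul_grade i j k : m i j k != 0 -> d k = d i (+) d j.
Proof. by case: hopf => h _; apply: h. Qed.

Lemma hopf_unit_grade k : u k != 0 -> d k = false.
Proof. by case: hopf => _ [h _]; apply: h. Qed.

Lemma hopf_comul_grade k i j : c k i j != 0 -> d k = d i (+) d j.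
Proof. by case: hopf => _ [_ [h _]]; apply: h. Qed.

Lemma hopf_counit_grade k : ep k != 0 -> d k = false.
Proof. by case: hopf => _ [_ [_ [h _]]]; apply: h. Qed.

Lemma hopf_antipode_grade i j : s i j != 0 -> d j = d i.
Proof. by case: hopf => _ [_ [_ [_ [h _]]]]; apply: h. Qed.

Lemma hopf_mulA i j l k :
  \sum_p m i j p * m p l k = \sum_p m j l p * m i p k.
Proof. by case: hopf => _ [_ [_ [_ [_ [h _]]]]]. Qed.

Lemma hopf_mul1l j k : \sum_p u p * m p j k = kron j k.
Proof. by case: hopf => _ [_ [_ [_ [_ [_ [h _]]]]]]. Qed.

Lemma hopf_mul1r j k : \sum_p u p * m j p k = kron j k.
Proof. by case: hopf => _ [_ [_ [_ [_ [_ [_ [h _]]]]]]]. Qed.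

Lemma hopf_comulA k i j l :
  \sum_p c k p l * c p i j = \sum_p c k i p * c p j l.
Proof. by case: hopf => _ [_ [_ [_ [_ [_ [_ [_ [h _]]]]]]]]. Qed.

Lemma hopf_counitl k j : \sum_i ep i * c k i j = kron k j.
Proof. by case: hopf => _ [_ [_ [_ [_ [_ [_ [_ [_ [h _]]]]]]]]]. Qed.

Lemma hopf_counitr k i : \sum_j ep j * c k i j = kron k i.
Proof. by case: hopf => _ [_ [_ [_ [_ [_ [_ [_ [_ [_ [h _]]]]]]]]]]. Qed.

Lemma hopf_comulM a b i j : \sum_p m a b p * c p i j =
  \sum_i1 \sum_j1 \sum_i2 \sum_j2
    c a i1 j1 * c b i2 j2 * ssign (d j1) (d i2) * m i1 i2 i * m j1 j2 j.
Proof. by case: hopf => _ [_ [_ [_ [_ [_ [_ [_ [_ [_ [_ [h _]]]]]]]]]]]. Qed.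

Lemma hopf_comul1 i j : \sum_p u p * c p i j = u i * u j.
Proof. by case: hopf => _ [_ [_ [_ [_ [_ [_ [_ [_ [_ [_ [_ [h _]]]]]]]]]]]]. Qed.

Lemma hopf_counitM a b : \sum_p m a b p * ep p = ep a * ep b.
Proof. by case: hopf => _ [_ [_ [_ [_ [_ [_ [_ [_ [_ [_ [_ [_ [h _]]]]]]]]]]]]]. Qed.

Lemma hopf_counit1 : \sum_p u p * ep p = 1.
Proof. by case: hopf => _ [_ [_ [_ [_ [_ [_ [_ [_ [_ [_ [_ [_ [_ [h _]]]]]]]]]]]]]]. Qed.

Lemma hopf_antipodel k q :
  \sum_i \sum_j \sum_p c k i j * s i p * m p j q = ep k * u q.
Proof. by case: hopf => _ [_ [_ [_ [_ [_ [_ [_ [_ [_ [_ [_ [_ [_ [_ [h _]]]]]]]]]]]]]]]. Qed.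

Lemma hopf_antipoder k q :
  \sum_i \sum_j \sum_p c k i j * s j p * m i p q = ep k * u q.
Proof. by case: hopf => _ [_ [_ [_ [_ [_ [_ [_ [_ [_ [_ [_ [_ [_ [_ [_ h]]]]]]]]]]]]]]]. Qed.

Lemma hopf_unit_odd k : d k -> u k = 0.
Proof. by move=> dk; apply: contraTeq dk => /hopf_unit_grade ->. Qed.

Lemma hopf_counit_odd k : d k -> ep k = 0.
Proof. by move=> dk; apply: contraTeq dk => /hopf_counit_grade ->. Qed.

Lemma hopf_exists_even (j : 'I_n) : exists i, d i = false.
Proof.
have [i /negbTE even_i | all_odd] := pickP (fun i => ~~ d i); first by exists i.
have := hopf_mul1l j j; rewrite big1 => [|p _]; last first.
  by rewrite hopf_unit_odd ?mul0r //; apply/negbFE/all_odd.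
by move/eqP; rewrite /kron eqxx eq_sym oner_eq0.
Qed.

End HopfAxioms.

Lemma sum_neq0_exists (V : nmodType) (T : finType) (F : T -> V) :
  \sum_i F i != 0 -> exists i, F i != 0.
Proof.
move=> h; apply/existsP; apply: contraNT h => /existsPn h.
by apply/eqP; apply: big1 => i _; move: (h i); rewrite negbK => /eqP.
Qed.

Section Sums.
Variables (R : comNzRingType) (n : nat).
Local Notation I := 'I_n.

Lemma sum_kronl k (F : I -> R) : \sum_l kron k l * F l = F k.
Proof.
rewrite (bigD1 k) //= /kron eqxx mul1r big1 ?addr0 // => l.
by rewrite eq_sym => /negbTE ->; rewrite mul0r.
Qed.

Lemma kronC (i j : I) : kron i j = kron j i :> R.
Proof. by rewrite /kron eq_sym. Qed.

Lemma sum_kronr k (F : I -> R) : \sum_l F l * kron k l = F k.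
Proof. by under eq_bigr do rewrite mulrC; apply: sum_kronl. Qed.

Lemma exchange_big3 (F : I -> I -> I -> R) :
  \sum_i \sum_j \sum_p F i j p = \sum_p \sum_i \sum_j F i j p.
Proof. by under eq_bigr => i _ do rewrite exchange_big; rewrite exchange_big. Qed.

Lemma exchange_big22 (F : I -> I -> I -> I -> R) :
  \sum_a \sum_b \sum_x \sum_y F a b x y = \sum_x \sum_y \sum_a \sum_b F a b x y.
Proof. by under eq_bigr => a _ do rewrite -exchange_big3; rewrite -exchange_big3. Qed.

Lemma big_distrr2 (A : I -> I -> R) (F : I -> I -> I -> I -> R) :
  \sum_x \sum_y A x y * (\sum_a \sum_b F x y a b) =
  \sum_x \sum_y \sum_a \sum_b A x y * F x y a b.
Proof.
apply: eq_bigr => x _; apply: eq_bigr => y _.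
by rewrite big_distrr; apply: eq_bigr => a _; rewrite big_distrr.
Qed.

Lemma sum2_suml (a : I -> R) (X : I -> I -> I -> R) (Z : I -> I -> R) :
  \sum_e \sum_e' (\sum_p a p * X p e e') * Z e e' =
  \sum_p a p * (\sum_e \sum_e' X p e e' * Z e e').
Proof.
under eq_bigr => x _ do under eq_bigr => y _ do rewrite big_distrl.
rewrite exchange_big3; apply: eq_bigr => p _.
rewrite big_distrr; apply: eq_bigr => x _ /=.
by rewrite big_distrr; apply: eq_bigr => y _ /=; rewrite mulrA.
Qed.

Lemma big_distrl4 (F : I -> I -> I -> I -> R) A B :
  (\sum_a \sum_b \sum_x \sum_y F a b x y) * A * B =
  \sum_a \sum_b \sum_x \sum_y F a b x y * A * B.
Proof.
rewrite -mulrA big_distrl; apply: eq_bigr => a _ /=.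
rewrite big_distrl; apply: eq_bigr => b _ /=.
rewrite big_distrl; apply: eq_bigr => x _ /=.
by rewrite big_distrl; apply: eq_bigr => y _ /=; rewrite mulrA.
Qed.

Lemma exchange_big4 (F : I -> I -> I -> I -> I -> R) :
  \sum_z \sum_a \sum_b \sum_x \sum_y F z a b x y =
  \sum_a \sum_b \sum_x \sum_y \sum_z F z a b x y.
Proof.
rewrite exchange_big; apply: eq_bigr => a _.
rewrite exchange_big; apply: eq_bigr => b _.
by rewrite exchange_big; apply: eq_bigr => x _; apply: exchange_big.
Qed.

Lemma sum_mul2 C (A B : I -> R) :
  \sum_x \sum_y C * A x * B y = C * (\sum_x A x) * (\sum_y B y).
Proof.
rewrite [C * _]big_distrr /= big_distrl /=; apply: eq_bigr => x _ /=.
by rewrite [RHS]big_distrr /=; apply: eq_bigr => y _ /=; ring.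
Qed.

Lemma sum2_sumr (X : I -> I -> R) (a : I -> R) (Y : I -> I -> I -> R) :
  \sum_e \sum_e' X e e' * (\sum_p a p * Y p e e') =
  \sum_p a p * (\sum_e \sum_e' X e e' * Y p e e').
Proof.
under eq_bigr => x _ do under eq_bigr => y _ do rewrite big_distrr.
rewrite exchange_big3; apply: eq_bigr => p _.
rewrite big_distrr; apply: eq_bigr => x _ /=.
by rewrite big_distrr; apply: eq_bigr => y _ /=; ring.
Qed.

Lemma exchange_sum2_mul (X A : I -> I -> R) (W : I -> I -> I -> I -> R) :
  \sum_f \sum_f' X f f' * (\sum_e \sum_e' A e e' * W e e' f f') =
  \sum_e \sum_e' A e e' * (\sum_f \sum_f' X f f' * W e e' f f').
Proof.
rewrite !big_distrr2 exchange_big22; apply: eq_bigr => e _; apply: eq_bigr => e' _.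
by apply: eq_bigr => f _; apply: eq_bigr => f' _; ring.
Qed.

End Sums.

(* [P p] lists the old coordinates of a new basis vector f_p and [Q] is the
   inverse matrix, so [coord v] gives the new coordinates of the vector with old
   coordinates [v]; [m'], [u'], [c'], [ep'], [s'] are the structure constants in
   the basis f. *)
Section BasisChange.
Variables (K : fieldType) (n : nat).
Local Notation I := 'I_n.

Variables P Q : I -> I -> K.
Hypothesis PQ : forall p q, \sum_k P p k * Q k q = kron p q.
Hypothesis QP : forall k l, \sum_p Q k p * P p l = kron k l.

Definition lincomb (a : I -> K) (g : I -> I -> K) : I -> K :=
  fun x => \sum_p a p * g p x.

Definition coord (v : I -> K) : I -> K := fun r => \sum_k v k * Q k r.

Definition coord2 (T : I -> I -> K) : I -> I -> K :=
  fun p q => \sum_i \sum_j T i j * Q i p * Q j q.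

Lemma eq_lincomb a g g' : (forall p, g p = g' p) -> lincomb a g = lincomb a g'.
Proof.
move=> eq_g; apply: functional_extensionality => x.
by rewrite /lincomb; under eq_bigr do rewrite eq_g.
Qed.

Lemma sum_lincomb a g (F : I -> K) :
  \sum_x lincomb a g x * F x = \sum_p a p * \sum_x g p x * F x.
Proof.
rewrite /lincomb; under eq_bigr do rewrite big_distrl.
rewrite exchange_big /=; apply: eq_bigr => p _.
by rewrite big_distrr; apply: eq_bigr => x _ /=; rewrite mulrA.
Qed.

Lemma lincomb_kron v : lincomb v (@kron K n) = v.
Proof.
apply: functional_extensionality => x; rewrite /lincomb.
by under eq_bigr do rewrite kronC; apply: sum_kronr.
Qed.

Lemma sum_QP x (F : I -> K) : \sum_p Q x p * (\sum_z P p z * F z) = F x.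
Proof.
under eq_bigr => p _ do rewrite big_distrr.
rewrite exchange_big /=.
under eq_bigr => z _ do (under eq_bigr => p _ do rewrite mulrA; rewrite -big_distrl /= QP).
exact: sum_kronl.
Qed.

Lemma lincomb_coord v : lincomb (coord v) P = v.
Proof.
apply: functional_extensionality => x; rewrite /lincomb /coord.
under eq_bigr => p _ do rewrite big_distrl.
rewrite exchange_big /=.
under eq_bigr => z _ do (under eq_bigr => p _ do rewrite -mulrA; rewrite -big_distrr /= QP kronC).
exact: sum_kronr.
Qed.

Lemma coord_lincomb a g r : coord (lincomb a g) r = \sum_p a p * coord (g p) r.
Proof. exact: sum_lincomb. Qed.

Lemma coordP p r : coord (P p) r = kron p r.
Proof. exact: PQ. Qed.

Lemma coord_kron x r : coord (kron x) r = Q x r.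
Proof. exact: sum_kronl. Qed.

Lemma coord2_lincomb (a : I -> K) (G : I -> I -> I -> K) p q :
  coord2 (fun i j => \sum_r a r * G r i j) p q = \sum_r a r * coord2 (G r) p q.
Proof.
rewrite /coord2.
under eq_bigr => i _ do under eq_bigr => j _ do rewrite !big_distrl.
rewrite exchange_big3; apply: eq_bigr => r _.
rewrite big_distrr; apply: eq_bigr => i _ /=.
by rewrite big_distrr; apply: eq_bigr => j _ /=; rewrite !mulrA.
Qed.

Lemma sum_coord2l T (G : I -> K) l : \sum_p coord2 T p l * G p =
  \sum_x \sum_y T x y * (Q y l * (\sum_p Q x p * G p)).
Proof.
rewrite /coord2.
under eq_bigr => p _ do (rewrite big_distrl; under eq_bigr => x _ do rewrite big_distrl).
rewrite -exchange_big3; apply: eq_bigr => x _; apply: eq_bigr => y _.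
by rewrite !big_distrr; apply: eq_bigr => p _ /=; ring.
Qed.

Lemma sum_coord2r T (G : I -> K) i : \sum_p coord2 T i p * G p =
  \sum_x \sum_y T x y * (Q x i * (\sum_p Q y p * G p)).
Proof.
rewrite /coord2.
under eq_bigr => p _ do (rewrite big_distrl; under eq_bigr => x _ do rewrite big_distrl).
rewrite -exchange_big3; apply: eq_bigr => x _; apply: eq_bigr => y _.
by rewrite !big_distrr; apply: eq_bigr => p _ /=; ring.
Qed.

Lemma sum_coord2_QP T (Y : I -> I -> K) :
  \sum_p \sum_q coord2 T p q * (\sum_e \sum_e' P p e * P q e' * Y e e') =
  \sum_e \sum_e' T e e' * Y e e'.
Proof.
have inner p y : \sum_q Q y q * (\sum_e \sum_e' P p e * P q e' * Y e e') =
    \sum_e P p e * Y e y.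
  transitivity (\sum_q Q y q * (\sum_e P p e * (\sum_e' P q e' * Y e e'))).
    apply: eq_bigr => q _; congr (_ * _); apply: eq_bigr => e _.
    by rewrite big_distrr; apply: eq_bigr => e' _ /=; ring.
  under eq_bigr => q _ do rewrite big_distrr.
  rewrite exchange_big /=; apply: eq_bigr => e _.
  rewrite -(sum_QP y (fun e' => Y e e')) big_distrr.
  by apply: eq_bigr => q _ /=; ring.
rewrite /coord2.
under eq_bigr => p _ do under eq_bigr => q _ do
  (rewrite big_distrl; under eq_bigr => x _ do rewrite big_distrl).
rewrite exchange_big22; apply: eq_bigr => x _; apply: eq_bigr => y _.
transitivity (T x y * \sum_p Q x p *
    (\sum_q Q y q * (\sum_e \sum_e' P p e * P q e' * Y e e'))).
  rewrite big_distrr; apply: eq_bigr => p _ /=.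
  by rewrite !big_distrr; apply: eq_bigr => q _ /=; ring.
by under eq_bigr => p _ do rewrite inner; rewrite (sum_QP x (fun e => Y e y)).
Qed.

Variables (d : I -> bool) (m : I -> I -> I -> K) (u : I -> K).
Variables (c : I -> I -> I -> K) (ep : I -> K) (s : I -> I -> K).
Hypothesis hopf : is_hopf_superalgebra d m u c ep s.

Definition mulv (v w : I -> K) : I -> K :=
  fun k => \sum_i \sum_j v i * w j * m i j k.

Definition epsv (v : I -> K) : K := \sum_k v k * ep k.

Definition m' p q r := coord (mulv (P p) (P q)) r.
Definition u' := coord u.
Definition ep' p := epsv (P p).

Lemma mulv_lincombl a g w : mulv (lincomb a g) w = lincomb a (fun p => mulv (g p) w).
Proof.
apply: functional_extensionality => k; rewrite /mulv /lincomb.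
under eq_bigr => i _ do under eq_bigr => j _ do rewrite !big_distrl.
rewrite exchange_big3; apply: eq_bigr => p _.
rewrite big_distrr; apply: eq_bigr => i _ /=.
by rewrite big_distrr; apply: eq_bigr => j _ /=; rewrite !mulrA.
Qed.

Lemma mulv_lincombr a g w : mulv w (lincomb a g) = lincomb a (fun p => mulv w (g p)).
Proof.
apply: functional_extensionality => k; rewrite /mulv /lincomb.
under eq_bigr => i _ do under eq_bigr => j _ do rewrite !(big_distrl, big_distrr).
rewrite exchange_big3; apply: eq_bigr => p _.
rewrite big_distrr; apply: eq_bigr => i _ /=.
by rewrite big_distrr; apply: eq_bigr => j _ /=; rewrite !mulrA [a p * w i]mulrC.
Qed.

Lemma mulv_kron i j : mulv (kron i) (kron j) = m i j.
Proof.
apply: functional_extensionality => k; rewrite /mulv.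
under eq_bigr => i' _ do under eq_bigr => j' _ do rewrite -mulrA.
under eq_bigr => i' _ do rewrite -big_distrr /= sum_kronl.
exact: sum_kronl.
Qed.

Lemma mulvA v w z : mulv (mulv v w) z = mulv v (mulv w z).
Proof.
rewrite -[v]lincomb_kron -[w]lincomb_kron -[z]lincomb_kron !mulv_lincombl.
apply: eq_lincomb => i.
rewrite [mulv (kron i) _]mulv_lincombr mulv_lincombl mulv_lincombr; apply: eq_lincomb => j.
rewrite [mulv (kron j) _]mulv_lincombr !mulv_lincombr; apply: eq_lincomb => l.
rewrite !mulv_kron; apply: functional_extensionality => k; rewrite /mulv.
under eq_bigr => i' _ do (under eq_bigr => j' _ do rewrite mulrAC; rewrite sum_kronr).
symmetry; rewrite exchange_big /=.
under eq_bigr => j' _ do (under eq_bigr => i' _ do rewrite -mulrA; rewrite sum_kronl).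
by rewrite (hopf_mulA hopf).
Qed.

Lemma mul1v w : mulv u w = w.
Proof.
rewrite -[in RHS](lincomb_kron w) -{1}(lincomb_kron w) mulv_lincombr.
apply: eq_lincomb => j; apply: functional_extensionality => k; rewrite /mulv.
under eq_bigr => i _ do (under eq_bigr => j' _ do rewrite mulrAC; rewrite sum_kronr).
exact: (hopf_mul1l hopf).
Qed.

Lemma mulv1 w : mulv w u = w.
Proof.
rewrite -[in RHS](lincomb_kron w) -{1}(lincomb_kron w) mulv_lincombl.
apply: eq_lincomb => j; apply: functional_extensionality => k; rewrite /mulv.
under eq_bigr => i _ do (under eq_bigr => j' _ do rewrite -mulrA; rewrite -big_distrr /=).
by rewrite sum_kronl (hopf_mul1r hopf).
Qed.

Lemma sum_coord_mulvl v w k :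
  \sum_p coord v p * coord (mulv (P p) w) k = coord (mulv v w) k.
Proof. by rewrite -[in RHS](lincomb_coord v) mulv_lincombl coord_lincomb. Qed.

Lemma sum_coord_mulvr v w k :
  \sum_p coord v p * coord (mulv w (P p)) k = coord (mulv w v) k.
Proof. by rewrite -[in RHS](lincomb_coord v) mulv_lincombr coord_lincomb. Qed.

Lemma m'A i j l k : \sum_p m' i j p * m' p l k = \sum_p m' j l p * m' i p k.
Proof. by rewrite /m' sum_coord_mulvl sum_coord_mulvr mulvA. Qed.

Lemma m'1l j k : \sum_p u' p * m' p j k = kron j k.
Proof. by rewrite /u' /m' sum_coord_mulvl mul1v coordP. Qed.

Lemma m'1r j k : \sum_p u' p * m' j p k = kron j k.
Proof. by rewrite /u' /m' sum_coord_mulvr mulv1 coordP. Qed.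

Lemma epsv_lincomb a g : epsv (lincomb a g) = \sum_p a p * epsv (g p).
Proof. exact: sum_lincomb. Qed.

Lemma epsvM v w : epsv (mulv v w) = epsv v * epsv w.
Proof.
rewrite -[v]lincomb_kron -[w]lincomb_kron mulv_lincombl !epsv_lincomb big_distrl.
apply: eq_bigr => i _; rewrite /= mulv_lincombr epsv_lincomb -mulrA.
congr (_ * _); rewrite big_distrr /=; apply: eq_bigr => j _.
by rewrite mulv_kron /epsv !sum_kronl (hopf_counitM hopf) mulrCA.
Qed.

Lemma ep'M a b : \sum_p m' a b p * ep' p = ep' a * ep' b.
Proof. by rewrite /ep' -epsvM -[in RHS](lincomb_coord (mulv (P a) (P b))) epsv_lincomb. Qed.

Lemma ep'1 : \sum_p u' p * ep' p = 1.
Proof. by rewrite /ep' /u' -epsv_lincomb lincomb_coord; apply: (hopf_counit1 hopf). Qed.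

Definition copv (v : I -> K) : I -> I -> K := fun i j => \sum_k v k * c k i j.

Definition c' r p q := coord2 (copv (P r)) p q.

Lemma copv_lincomb a g : copv (lincomb a g) = fun i j => \sum_p a p * copv (g p) i j.
Proof.
apply: functional_extensionality => i; apply: functional_extensionality => j.
exact: sum_lincomb.
Qed.

Lemma copv_kron x : copv (kron x) = c x.
Proof.
apply: functional_extensionality => i; apply: functional_extensionality => j.
exact: sum_kronl.
Qed.

Lemma sum_coord_c' v i j : \sum_p coord v p * c' p i j = coord2 (copv v) i j.
Proof. by rewrite -[in RHS](lincomb_coord v) copv_lincomb coord2_lincomb. Qed.

Lemma sum_Q_c' x i j : \sum_p Q x p * c' p i j = coord2 (c x) i j.
Proof. by rewrite -copv_kron -sum_coord_c'; under [RHS]eq_bigr do rewrite coord_kron. Qed.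

Lemma c'1 i j : \sum_p u' p * c' p i j = u' i * u' j.
Proof.
rewrite sum_coord_c' /u' /coord2 /copv /coord.
under eq_bigr => i' _ do under eq_bigr => j' _ do rewrite (hopf_comul1 hopf).
rewrite big_distrl; apply: eq_bigr => i' _ /=.
by rewrite big_distrr; apply: eq_bigr => j' _ /=; ring.
Qed.

Lemma c'A k i j l : \sum_p c' k p l * c' p i j = \sum_p c' k i p * c' p j l.
Proof.
rewrite /c' (sum_coord2l _ (fun p => c' p i j)) (sum_coord2r _ (fun p => c' p j l)).
under eq_bigr => x _ do under eq_bigr => y _ do rewrite sum_Q_c'.
under [RHS]eq_bigr => x _ do under eq_bigr => y _ do rewrite sum_Q_c'.
rewrite !sum2_suml; apply: eq_bigr => w _; congr (_ * _).
rewrite /coord2.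
under eq_bigr => x _ do under eq_bigr => y _ do rewrite mulrA.
under [RHS]eq_bigr => x _ do under eq_bigr => y _ do rewrite mulrA.
rewrite !big_distrr2 exchange_big22.
under [RHS]eq_bigr => x _ do rewrite -exchange_big3.
apply: eq_bigr => a _; apply: eq_bigr => b _.
rewrite exchange_big; apply: eq_bigr => y _.
transitivity (Q a i * Q b j * Q y l * \sum_x c w x y * c x a b).
  by rewrite big_distrr; apply: eq_bigr => x _ /=; ring.
by rewrite (hopf_comulA hopf) big_distrr; apply: eq_bigr => x _ /=; ring.
Qed.

Lemma c'_counitl k j : \sum_i ep' i * c' k i j = kron k j.
Proof.
under eq_bigr => i _ do rewrite mulrC.
rewrite /c' (sum_coord2l _ ep') /ep' /epsv.
under eq_bigr => x _ do under eq_bigr => y _ do rewrite sum_QP.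
rewrite sum2_suml -PQ; apply: eq_bigr => w _; congr (_ * _).
rewrite exchange_big /=; transitivity (\sum_y kron w y * Q y j); last exact: sum_kronl.
apply: eq_bigr => y _; rewrite -(hopf_counitl hopf) big_distrl.
by apply: eq_bigr => x _ /=; ring.
Qed.

Lemma c'_counitr k i : \sum_j ep' j * c' k i j = kron k i.
Proof.
under eq_bigr => j _ do rewrite mulrC.
rewrite /c' (sum_coord2r _ ep') /ep' /epsv.
under eq_bigr => x _ do under eq_bigr => y _ do rewrite sum_QP.
rewrite sum2_suml -PQ; apply: eq_bigr => w _; congr (_ * _).
transitivity (\sum_x kron w x * Q x i); last exact: sum_kronl.
apply: eq_bigr => x _; rewrite -(hopf_counitr hopf) big_distrl.
by apply: eq_bigr => y _ /=; ring.
Qed.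

Variable D : I -> bool.
Hypothesis P_grade : forall p k, P p k != 0 -> d k = D p.
Hypothesis Q_grade : forall k p, Q k p != 0 -> d k = D p.

Lemma m'E p q r : m' p q r = \sum_e \sum_f P p e * P q f * coord (m e f) r.
Proof.
rewrite /m' /coord /mulv.
under eq_bigr => k _ do (rewrite big_distrl; under eq_bigr => e _ do rewrite big_distrl).
rewrite -exchange_big3; apply: eq_bigr => e _; apply: eq_bigr => f _.
by rewrite big_distrr; apply: eq_bigr => k _ /=; ring.
Qed.

(* The new coordinate (i, j) of (e_e ⊗ e_e') (e_f ⊗ e_f') in A ⊗ A. *)
Definition tensor_mul_coord i j e e' f f' :=
  ssign (d e') (d f) * coord (m e f) i * coord (m e' f') j.

Lemma coord2_copv_mulv_kron p q i j :
  coord2 (copv (mulv (kron p) (kron q))) i j =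
  \sum_e \sum_e' c p e e' * (\sum_f \sum_f' c q f f' * tensor_mul_coord i j e e' f f').
Proof.
rewrite mulv_kron /coord2 /copv.
under eq_bigr => x _ do under eq_bigr => y _ do rewrite (hopf_comulM hopf) big_distrl4.
under eq_bigr => x _ do rewrite exchange_big4.
rewrite exchange_big4 big_distrr2; apply: eq_bigr => e _; apply: eq_bigr => e' _.
apply: eq_bigr => f _; apply: eq_bigr => f' _.
rewrite /tensor_mul_coord /coord.
transitivity (\sum_x \sum_y (c p e e' * c q f f' * ssign (d e') (d f)) *
   (m e f x * Q x i) * (m e' f' y * Q y j)).
  by apply: eq_bigr => x _; apply: eq_bigr => y _; ring.
by rewrite sum_mul2; ring.
Qed.

Lemma coord2_copv_mulv v w i j :
  coord2 (copv (mulv v w)) i j =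
  \sum_e \sum_e' copv v e e' *
    (\sum_f \sum_f' copv w f f' * tensor_mul_coord i j e e' f f').
Proof.
rewrite -[v]lincomb_kron -[w]lincomb_kron mulv_lincombl copv_lincomb coord2_lincomb.
rewrite [copv (lincomb v _)]copv_lincomb sum2_suml; apply: eq_bigr => p _; congr (_ * _).
rewrite mulv_lincombr copv_lincomb coord2_lincomb copv_lincomb /=.
under [RHS]eq_bigr => e _ do under eq_bigr => e' _ do rewrite sum2_suml.
rewrite sum2_sumr; apply: eq_bigr => q _; congr (_ * _).
by rewrite !copv_kron coord2_copv_mulv_kron.
Qed.

(* P is homogeneous, so the sign may be computed from the old basis indices. *)
Lemma ssign_m'2 i1 i2 j1 j2 i j : ssign (D j1) (D i2) * m' i1 i2 i * m' j1 j2 j =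
  \sum_f \sum_f' P i2 f * P j2 f' *
    (\sum_e \sum_e' P i1 e * P j1 e' * tensor_mul_coord i j e e' f f').
Proof.
rewrite !m'E /tensor_mul_coord.
transitivity (\sum_e \sum_f \sum_e' \sum_f' ssign (D j1) (D i2) *
   (P i1 e * P i2 f * coord (m e f) i) * (P j1 e' * P j2 f' * coord (m e' f') j)).
  rewrite [ssign _ _ * _]big_distrr /= big_distrl /=; apply: eq_bigr => e _.
  rewrite [ssign _ _ * _]big_distrr /= big_distrl /=; apply: eq_bigr => f _.
  rewrite big_distrr /=; apply: eq_bigr => e' _.
  by rewrite big_distrr /=; apply: eq_bigr => f' _; ring.
under eq_bigr => e _ do rewrite exchange_big.
rewrite exchange_big22; apply: eq_bigr => f _; apply: eq_bigr => f' _.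
rewrite [RHS]big_distrr /=; apply: eq_bigr => e _.
rewrite [RHS]big_distrr /=; apply: eq_bigr => e' _.
have [->|hf] := eqVneq (P i2 f) 0; first by rewrite !(mul0r, mulr0).
have [->|he] := eqVneq (P j1 e') 0; first by rewrite !(mul0r, mulr0).
by rewrite (P_grade hf) (P_grade he); ring.
Qed.

Lemma c'M a b i j : \sum_p m' a b p * c' p i j =
  \sum_i1 \sum_j1 \sum_i2 \sum_j2
    c' a i1 j1 * c' b i2 j2 * ssign (D j1) (D i2) * m' i1 i2 i * m' j1 j2 j.
Proof.
rewrite {1}/m' sum_coord_c' coord2_copv_mulv.
transitivity (\sum_i1 \sum_j1 c' a i1 j1 * (\sum_i2 \sum_j2 c' b i2 j2 *
   (ssign (D j1) (D i2) * m' i1 i2 i * m' j1 j2 j))); last first.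
  apply: eq_bigr => i1 _; apply: eq_bigr => j1 _.
  rewrite big_distrr; apply: eq_bigr => i2 _ /=.
  by rewrite big_distrr; apply: eq_bigr => j2 _ /=; ring.
under [RHS]eq_bigr => i1 _ do under eq_bigr => j1 _ do
  under eq_bigr => i2 _ do under eq_bigr => j2 _ do rewrite ssign_m'2.
under [RHS]eq_bigr => i1 _ do under eq_bigr => j1 _ do
  rewrite sum_coord2_QP (exchange_sum2_mul _ (fun e e' => P i1 e * P j1 e')).
by rewrite sum_coord2_QP.
Qed.

Definition antv (v : I -> K) : I -> K := fun j => \sum_i v i * s i j.

Definition s' p q := coord (antv (P p)) q.

Lemma antv_lincomb a g : antv (lincomb a g) = lincomb a (fun p => antv (g p)).
Proof. by apply: functional_extensionality => j; apply: sum_lincomb. Qed.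

Lemma coord_sum2 (a : I -> I -> K) (V : I -> I -> I -> K) q :
  \sum_e \sum_e' a e e' * coord (V e e') q =
  coord (fun z => \sum_e \sum_e' a e e' * V e e' z) q.
Proof.
rewrite /coord.
under eq_bigr => e _ do under eq_bigr => e' _ do rewrite big_distrr.
rewrite exchange_big3; apply: eq_bigr => z _ /=.
rewrite big_distrl; apply: eq_bigr => e _ /=.
by rewrite big_distrl; apply: eq_bigr => e' _ /=; rewrite mulrA.
Qed.

Lemma coord_mulv_bilinear (B : (I -> K) -> (I -> K) -> (I -> K)) v w q :
  (forall a g w, B (lincomb a g) w = lincomb a (fun p => B (g p) w)) ->
  (forall a g w, B w (lincomb a g) = lincomb a (fun p => B w (g p))) ->
  coord (B v w) q = \sum_e \sum_e' v e * w e' * coord (B (kron e) (kron e')) q.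
Proof.
move=> Bl Br; rewrite -{1}(lincomb_kron v) Bl coord_lincomb; apply: eq_bigr => e _.
rewrite -{1}(lincomb_kron w) Br coord_lincomb big_distrr.
by apply: eq_bigr => e' _ /=; rewrite mulrA.
Qed.

Lemma sum_c'_P k (g : I -> I -> K) :
  \sum_i \sum_j c' k i j * (\sum_e \sum_e' P i e * P j e' * g e e') =
  \sum_w P k w * \sum_e \sum_e' c w e e' * g e e'.
Proof. by rewrite sum_coord2_QP sum2_suml. Qed.

Lemma coordZ a v r : coord (fun z => a * v z) r = a * coord v r.
Proof. by rewrite /coord big_distrr; apply: eq_bigr => k _ /=; rewrite mulrA. Qed.

Lemma antv_kron e t : antv (kron e) t = s e t.
Proof. exact: sum_kronl. Qed.

Lemma mulv_kronr v e' z : mulv v (kron e') z = \sum_t v t * m t e' z.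
Proof.
rewrite /mulv; apply: eq_bigr => t _.
by under eq_bigr do rewrite mulrAC; rewrite sum_kronr.
Qed.

Lemma mulv_kronl e w z : mulv (kron e) w z = \sum_t w t * m e t z.
Proof.
rewrite /mulv exchange_big /=; apply: eq_bigr => t _.
by under eq_bigr do rewrite -mulrA; rewrite sum_kronl.
Qed.

Lemma antipodel_vec w z :
  \sum_e \sum_e' c w e e' * mulv (antv (kron e)) (kron e') z = ep w * u z.
Proof.
rewrite -(hopf_antipodel hopf); apply: eq_bigr => e _; apply: eq_bigr => e' _.
rewrite mulv_kronr big_distrr; apply: eq_bigr => t _ /=.
by rewrite antv_kron mulrA.
Qed.

Lemma antipoder_vec w z :
  \sum_e \sum_e' c w e e' * mulv (kron e) (antv (kron e')) z = ep w * u z.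
Proof.
rewrite -(hopf_antipoder hopf); apply: eq_bigr => e _; apply: eq_bigr => e' _.
rewrite mulv_kronl big_distrr; apply: eq_bigr => t _ /=.
by rewrite antv_kron mulrA.
Qed.

Lemma s'_antipodel k q :
  \sum_i \sum_j \sum_p c' k i j * s' i p * m' p j q = ep' k * u' q.
Proof.
have expand i j : coord (mulv (antv (P i)) (P j)) q =
    \sum_e \sum_e' P i e * P j e' * coord (mulv (antv (kron e)) (kron e')) q.
  apply: (@coord_mulv_bilinear (fun v w => mulv (antv v) w)) => a g w.
    by rewrite antv_lincomb mulv_lincombl.
  by rewrite mulv_lincombr.
transitivity (\sum_i \sum_j c' k i j * coord (mulv (antv (P i)) (P j)) q).
  apply: eq_bigr => i _; apply: eq_bigr => j _.
  rewrite /s' /m' -sum_coord_mulvl big_distrr.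
  by apply: eq_bigr => p _ /=; rewrite mulrA.
under eq_bigr => i _ do under eq_bigr => j _ do rewrite expand.
rewrite sum_c'_P /ep' /epsv /u' big_distrl; apply: eq_bigr => w _ /=.
rewrite coord_sum2 -mulrA -[ep w * _]coordZ; congr (_ * coord _ q).
by apply: functional_extensionality => z; apply: antipodel_vec.
Qed.

Lemma s'_antipoder k q :
  \sum_i \sum_j \sum_p c' k i j * s' j p * m' i p q = ep' k * u' q.
Proof.
have expand i j : coord (mulv (P i) (antv (P j))) q =
    \sum_e \sum_e' P i e * P j e' * coord (mulv (kron e) (antv (kron e'))) q.
  apply: (@coord_mulv_bilinear (fun v w => mulv v (antv w))) => a g w.
    by rewrite mulv_lincombl.
  by rewrite antv_lincomb mulv_lincombr.
transitivity (\sum_i \sum_j c' k i j * coord (mulv (P i) (antv (P j))) q).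
  apply: eq_bigr => i _; apply: eq_bigr => j _.
  rewrite /s' /m' -sum_coord_mulvr big_distrr.
  by apply: eq_bigr => p _ /=; rewrite mulrA.
under eq_bigr => i _ do under eq_bigr => j _ do rewrite expand.
rewrite sum_c'_P /ep' /epsv /u' big_distrl; apply: eq_bigr => w _ /=.
rewrite coord_sum2 -mulrA -[ep w * _]coordZ; congr (_ * coord _ q).
by apply: functional_extensionality => z; apply: antipoder_vec.
Qed.

Lemma m'_grade p q r : m' p q r != 0 -> D r = D p (+) D q.
Proof.
rewrite m'E => /sum_neq0_exists [e] /sum_neq0_exists [f].
rewrite !mulf_eq0 !negb_or => /andP [/andP [Pe Pf]] /sum_neq0_exists [k].
rewrite mulf_eq0 negb_or => /andP [mk Qk].
by rewrite -(P_grade Pe) -(P_grade Pf) -(Q_grade Qk) (hopf_mul_grade hopf mk).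
Qed.

Lemma u'_grade r : u' r != 0 -> D r = false.
Proof.
move=> /sum_neq0_exists [k]; rewrite mulf_eq0 negb_or => /andP [uk Qk].
by rewrite -(Q_grade Qk) (hopf_unit_grade hopf uk).
Qed.

Lemma c'_grade r p q : c' r p q != 0 -> D r = D p (+) D q.
Proof.
move=> /sum_neq0_exists [x] /sum_neq0_exists [y].
rewrite !mulf_eq0 !negb_or => /andP [/andP [/sum_neq0_exists [k] + Qx] Qy].
rewrite mulf_eq0 negb_or => /andP [Pk ck].
by rewrite -(P_grade Pk) -(Q_grade Qx) -(Q_grade Qy) (hopf_comul_grade hopf ck).
Qed.

Lemma ep'_grade p : ep' p != 0 -> D p = false.
Proof.
move=> /sum_neq0_exists [k]; rewrite mulf_eq0 negb_or => /andP [Pk ek].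
by rewrite -(P_grade Pk) (hopf_counit_grade hopf ek).
Qed.

Lemma s'_grade p q : s' p q != 0 -> D q = D p.
Proof.
move=> /sum_neq0_exists [k]; rewrite mulf_eq0 negb_or => /andP [/sum_neq0_exists [i] + Qk].
rewrite mulf_eq0 negb_or => /andP [Pi si].
by rewrite -(P_grade Pi) -(Q_grade Qk) (hopf_antipode_grade hopf si).
Qed.

Lemma hopf_basis_change : is_hopf_superalgebra D m' u' c' ep' s'.
Proof.
split; first exact: m'_grade.
split; first exact: u'_grade.
split; first exact: c'_grade.
split; first exact: ep'_grade.
split; first exact: s'_grade.
split; first exact: m'A.
split; first exact: m'1l.
split; first exact: m'1r.
split; first exact: c'A.
split; first exact: c'_counitl.
split; first exact: c'_counitr.
split; first exact: c'M.
split; first exact: c'1.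
split; first exact: ep'M.
split; first exact: ep'1.
split; first exact: s'_antipodel.
exact: s'_antipoder.
Qed.

End BasisChange.

Definition i0 : 'I_3 := @Ordinal 3 0 isT.
Definition i1 : 'I_3 := @Ordinal 3 1 isT.
Definition i2 : 'I_3 := @Ordinal 3 2 isT.

Lemma ord3P (i : 'I_3) : [\/ i = i0, i = i1 | i = i2].
Proof.
case: i => -[|[|[|//]]] lti; [apply: Or31 | apply: Or32 | apply: Or33].
all: exact: val_inj.
Qed.

Lemma sum_ord3 (R : nmodType) (F : 'I_3 -> R) : \sum_i F i = F i0 + F i1 + F i2.
Proof.
rewrite !big_ord_recl big_ord0 addr0 addrA.
by congr (F _ + F _ + F _); apply: val_inj.
Qed.

Lemma eq_by_lincomb2 (R : comPzRingType) (x y l1 r1 l2 r2 c1 c2 : R) :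
  l1 = r1 -> l2 = r2 -> x - y = c1 * (l1 - r1) + c2 * (l2 - r2) -> x = y.
Proof. by move=> -> ->; rewrite !subrr !mulr0 addr0 => /subr0_eq. Qed.

Section AugmentedBasis.
Variables (K : fieldType) (D : 'I_3 -> bool) (M : 'I_3 -> 'I_3 -> 'I_3 -> K).
Variables (U : 'I_3 -> K) (C : 'I_3 -> 'I_3 -> 'I_3 -> K) (EP : 'I_3 -> K).
Variable S : 'I_3 -> 'I_3 -> K.
Hypothesis hopf : is_hopf_superalgebra D M U C EP S.
Hypothesis U_e0 : forall r, U r = kron i0 r.
Hypothesis EP_e0 : forall r, EP r = kron i0 r.

Lemma D_e0 : D i0 = false.
Proof. by apply: (hopf_unit_grade hopf); rewrite U_e0 /kron eqxx oner_eq0. Qed.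

Lemma M_e0l q r : M i0 q r = kron q r.
Proof. by rewrite -(hopf_mul1l hopf) sum_ord3 !U_e0 /kron /= mul1r !mul0r !addr0. Qed.

Lemma M_e0r q r : M q i0 r = kron q r.
Proof. by rewrite -(hopf_mul1r hopf) sum_ord3 !U_e0 /kron /= mul1r !mul0r !addr0. Qed.

Lemma M_to_e0 p q : M p q i0 = kron i0 p * kron i0 q.
Proof. by rewrite -!EP_e0 -(hopf_counitM hopf) sum_ord3 !EP_e0 /kron /= mulr1 !mulr0 !addr0. Qed.

Lemma C_e0 i j : C i0 i j = kron i0 i * kron i0 j.
Proof. by rewrite -!U_e0 -(hopf_comul1 hopf) sum_ord3 !U_e0 /kron /= mul1r !mul0r !addr0. Qed.

Lemma C_e0l k j : C k i0 j = kron k j.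
Proof. by rewrite -(hopf_counitl hopf) sum_ord3 !EP_e0 /kron /= mul1r !mul0r !addr0. Qed.

Lemma C_e0r k i : C k i i0 = kron k i.
Proof. by rewrite -(hopf_counitr hopf) sum_ord3 !EP_e0 /kron /= mul1r !mul0r !addr0. Qed.

Definition M_table p q r : K :=
  if p == i0 then kron q r else if q == i0 then kron p r
  else if r == i0 then 0
  else if D r == D p (+) D q then M p q r else 0.

Lemma M_tableE p q r : M p q r = M_table p q r.
Proof.
rewrite /M_table; have [->|p0] := eqVneq p i0; first exact: M_e0l.
have [->|q0] := eqVneq q i0; first exact: M_e0r.
have [->|_] := eqVneq r i0; first by rewrite M_to_e0 /kron eq_sym (negbTE p0) mul0r.
case: eqP => // grade; apply/eqP; apply: contra_notT grade.
exact: (hopf_mul_grade hopf).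
Qed.

Definition C_table r p q : K :=
  if r == i0 then kron i0 p * kron i0 q
  else if p == i0 then kron r q else if q == i0 then kron r p
  else if D r == D p (+) D q then C r p q else 0.

Lemma C_tableE r p q : C r p q = C_table r p q.
Proof.
rewrite /C_table; case: ifP => [/eqP->|_]; first exact: C_e0.
case: ifP => [/eqP->|_]; first exact: C_e0l.
case: ifP => [/eqP->|_]; first exact: C_e0r.
case: eqP => // grade; apply/eqP; apply: contra_notT grade.
exact: (hopf_comul_grade hopf).
Qed.

Ltac expand h D1 D2 :=
  rewrite ?sum_ord3 ?M_tableE ?C_tableE ?U_e0 ?EP_e0 /M_table /C_table /kron /ssign in h;
  rewrite /= ?D_e0 ?D1 ?D2 /= in h;
  rewrite ?(mul0r, mulr0, mul1r, mulr1, add0r, addr0, mulN1r, mulrN1) in h.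

Lemma augmented_odd_pair : D i1 -> D i2 -> False.
Proof.
move=> D1 D2; have h := hopf_comulM hopf i1 i2 i1 i2; expand h D1 D2.
by move/eqP: h; rewrite eq_sym oner_eq0.
Qed.

(* Write x = e_1 and z = e_2.  The grading and the normalisation leave
     x^2 = θ x,  x z = α z,  z x = β z,  z^2 = q x,
     Δ x = x⊗1 + 1⊗x + γ x⊗x + λ z⊗z,  Δ z = z⊗1 + 1⊗z + a x⊗z + b z⊗x.
   Associativity gives q (α - θ) = q (β - α) = 0, hence q λ = 0 through Δ(z^2);
   the x⊗z coefficient of Δ(x z) then gives (1 + a θ)(1 + γ α) = 0, and the
   antipode at x gives S(x)_x (1 + γ θ) = -1.  Coassociativity forces γ = a if
   a != 0 and associativity forces θ = α if α != 0: both cases contradict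
   1 + γ θ != 0. *)
Lemma augmented_even_odd : ~~ D i1 -> D i2 -> False.
Proof.
move=> /negbTE D1 D2.
have mA := hopf_mulA hopf i1 i1 i2 i2; expand mA D1 D2.
have mB := hopf_mulA hopf i1 i2 i2 i1; expand mB D1 D2.
have mC := hopf_mulA hopf i2 i2 i2 i2; expand mC D1 D2.
have cA := hopf_comulA hopf i2 i1 i1 i2; expand cA D1 D2.
have cM22 := hopf_comulM hopf i2 i2 i2 i2; expand cM22 D1 D2.
have cM12 := hopf_comulM hopf i1 i2 i1 i2; expand cM12 D1 D2.
have s00 := hopf_antipodel hopf i0 i0; expand s00 D1 D2.
have s01 := hopf_antipodel hopf i0 i1; expand s01 D1 D2.
have s10 := hopf_antipodel hopf i1 i0; expand s10 D1 D2.
have s11 := hopf_antipodel hopf i1 i1; expand s11 D1 D2.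
rewrite s00 s01 s10 !mulr0 !mul0r !addr0 in s11.
set θ := M i1 i1 i1 in mA mB mC cM22 cM12 s11.
set α := M i1 i2 i2 in mA mB mC cM22 cM12 s11.
set β := M i2 i1 i2 in mA mB mC cM22 cM12 s11.
set q := M i2 i2 i1 in mA mB mC cM22 cM12 s11.
set γ := C i1 i1 i1 in cA cM22 cM12 s11.
set λ := C i1 i2 i2 in cA cM22 cM12 s11.
set a := C i2 i1 i2 in cA cM22 cM12 s11.
set b := C i2 i2 i1 in cA cM22 cM12 s11.
have qλ0 : q * λ = 0.
  have [->|q0] := eqVneq q 0; first by rewrite mul0r.
  have αθ : α = θ by apply: (mulfI q0); rewrite mulrC mB.
  have βα : β = α by apply: (mulfI q0); rewrite -mC.
  by rewrite cM22 βα; ring.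
have prod0 : (1 + a * θ) * (1 + γ * α) = 0.
  by apply: (eq_by_lincomb2 (c1 := -1) (c2 := 1 + b * β) cM12 qλ0); ring.
have S11 : S i1 i1 * (1 + γ * θ) = -1.
  by apply: (eq_by_lincomb2 (c1 := 1) (c2 := - S i2 i2) s11 qλ0); ring.
have γθ : 1 + γ * θ != 0.
  by apply: contra_eq_neq S11 => ->; rewrite mulr0 eq_sym oppr_eq0 oner_eq0.
move/eqP: prod0; rewrite mulf_eq0 => /orP [/eqP aθ | /eqP γα].
  have a0 : a != 0 by apply: contra_eq_neq aθ => ->; rewrite mul0r addr0 oner_eq0.
  have γa : γ = a by apply: (mulfI a0); rewrite cA.
  by move: γθ; rewrite γa aθ eqxx.
have α0 : α != 0 by apply: contra_eq_neq γα => ->; rewrite mulr0 addr0 oner_eq0.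
have θα : θ = α by apply: (mulIf α0); rewrite mA.
by move: γθ; rewrite θα γα eqxx.
Qed.

Lemma augmented_e2_even : D i2 = false.
Proof.
apply/negP => D2; case D1: (D i1); first exact: augmented_odd_pair.
by apply: augmented_even_odd; rewrite ?D1.
Qed.

End AugmentedBasis.

Section Distinct3.
Variables (a b o : 'I_3).
Hypotheses (ab : a != b) (ao : a != o) (bo : b != o).

Lemma ord3_distinctP k : [\/ k = a, k = b | k = o].
Proof.
move: ab ao bo; case: (ord3P a) => ->; case: (ord3P b) => ->; case: (ord3P o) => ->;
  by case: (ord3P k) => -> //= _ _ _; auto using Or31, Or32, Or33.
Qed.

Lemma sum_ord3_distinct (R : comNzRingType) (F : 'I_3 -> R) :
  \sum_i F i = F a + F b + F o.
Proof.
rewrite sum_ord3; move: ab ao bo.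
by case: (ord3P a) => ->; case: (ord3P b) => ->; case: (ord3P o) => -> //= _ _ _; ring.
Qed.

End Distinct3.

Section AugmentedBasisChoice.
Variables (K : fieldType) (d : 'I_3 -> bool) (m : 'I_3 -> 'I_3 -> 'I_3 -> K).
Variables (u : 'I_3 -> K) (c : 'I_3 -> 'I_3 -> 'I_3 -> K) (ep : 'I_3 -> K).
Variable s : 'I_3 -> 'I_3 -> K.
Hypothesis hopf : is_hopf_superalgebra d m u c ep s.
Variables (a b o : 'I_3).
Hypotheses (ab : a != b) (ao : a != o) (bo : b != o).
Hypotheses (even_a : d a = false) (odd_o : d o = true).

(* The rows of [aug_P] are 1, ε(e_b) e_a - ε(e_a) e_b and e_o; the middle one is
   homogeneous since whichever of e_a, e_b is odd has counit 0. *)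
Definition aug_P p k : K :=
  if p == i0 then u k
  else if p == i1 then (if k == a then ep b else if k == b then - ep a else 0)
  else (if k == o then 1 else 0).

Definition aug_Q k p : K :=
  if p == i0 then ep k
  else if p == i1 then (if k == a then u b else if k == b then - u a else 0)
  else (if k == o then 1 else 0).

Definition aug_D (p : 'I_3) : bool :=
  if p == i0 then false else if p == i1 then d b else true.

Let ba : b != a. Proof. by rewrite eq_sym. Qed.
Let oa : o != a. Proof. by rewrite eq_sym. Qed.
Let ob : o != b. Proof. by rewrite eq_sym. Qed.
Let u_o : u o = 0. Proof. exact: hopf_unit_odd hopf _ odd_o. Qed.
Let ep_o : ep o = 0. Proof. exact: hopf_counit_odd hopf _ odd_o. Qed.
Let u_ep : u a * ep a + u b * ep b = 1.
Proof. by rewrite -(hopf_counit1 hopf) (sum_ord3_distinct ab ao bo) u_o mul0r addr0. Qed.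

Ltac eval_abo := rewrite /aug_P /aug_Q /aug_D /kron /= ?eqxx
  ?(negbTE ab, negbTE ba, negbTE ao, negbTE oa, negbTE bo, negbTE ob) /= ?u_o ?ep_o.

Lemma aug_PQ p q : \sum_k aug_P p k * aug_Q k q = kron p q.
Proof.
rewrite (sum_ord3_distinct ab ao bo).
by case: (ord3P p) => ->; case: (ord3P q) => ->; eval_abo;
  first [by rewrite -u_ep; ring | ring].
Qed.

Lemma aug_QP k l : \sum_p aug_Q k p * aug_P p l = kron k l.
Proof.
rewrite sum_ord3.
case: (ord3_distinctP ab ao bo k) => ->; case: (ord3_distinctP ab ao bo l) => ->;
  by eval_abo; first [by rewrite -u_ep; ring | ring].
Qed.

Lemma aug_P_grade p k : aug_P p k != 0 -> d k = aug_D p.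
Proof.
case: (ord3P p) => ->; case: (ord3_distinctP ab ao bo k) => ->; eval_abo;
  rewrite ?even_a ?odd_o ?eqxx //;
  by [move/(hopf_unit_grade hopf) => -> | move/(hopf_counit_grade hopf) => ->].
Qed.

Lemma aug_Q_grade k p : aug_Q k p != 0 -> d k = aug_D p.
Proof.
case: (ord3P p) => ->; case: (ord3_distinctP ab ao bo k) => ->; eval_abo;
  rewrite ?even_a ?odd_o ?eqxx //;
  by [move/(hopf_unit_grade hopf) => -> | move/(hopf_counit_grade hopf) => ->].
Qed.

Lemma aug_unit r : u' aug_Q u r = kron i0 r.
Proof. by rewrite -(coordP aug_PQ); congr coord; apply: functional_extensionality. Qed.

Lemma aug_counit p : ep' aug_P ep p = kron i0 p.
Proof.
rewrite /ep' /epsv (sum_ord3_distinct ab ao bo).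
by case: (ord3P p) => ->; eval_abo; first [by rewrite -u_ep; ring | ring].
Qed.

Lemma no_augmented_basis : False.
Proof.
have hopf' := hopf_basis_change aug_PQ aug_QP hopf aug_P_grade aug_Q_grade.
by have := augmented_e2_even hopf' aug_unit aug_counit.
Qed.

End AugmentedBasisChoice.

Lemma ord3_other (a o : 'I_3) : exists2 b, a != b & b != o.
Proof.
by case: (ord3P a) => ->; case: (ord3P o) => ->; by [exists i0 | exists i1 | exists i2].
Qed.

Theorem theorem3p6 (K : closedFieldType) (charK0 : [pchar K] =i pred0)
  (d : 'I_3 -> bool) (m : 'I_3 -> 'I_3 -> 'I_3 -> K) (u : 'I_3 -> K)
  (c : 'I_3 -> 'I_3 -> 'I_3 -> K) (ep : 'I_3 -> K) (s : 'I_3 -> 'I_3 -> K) :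
  is_hopf_superalgebra d m u c ep s -> ~ (exists i, d i = true).
Proof.
move=> hopf [o odd_o].
have [a even_a] := hopf_exists_even hopf o.
have ao : a != o by apply: contraFneq even_a => ->.
have [b ab bo] := ord3_other a o.
exact: (no_augmented_basis hopf ab ao bo even_a odd_o).
Qed.
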